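(* Let $p$ be an odd prime, $s\ge1$, and $r\ge3$ an integer dividing $\frac{p^s\pm1}2$ (for a fixed choice of sign $\pm$). Let $\lambda=e^{2\pi i/(2r)}$ and $\eta=-\frac{(\lambda-\lambda^{-1})}{\sqrt{2r}}\,i$ with $\sqrt{2r}>0$. Then $$\eta^{p^s}\equiv\mp\left(\frac{-2r}{p}\right)^{s}\eta\pmod p,$$ where the sign $\mp$ is opposite to the sign $\pm$ in the hypothesis.
   Context: $\left(\frac{-2r}{p}\right)$ is the Legendre symbol. The congruence means the difference is $p$ times an element of the ring of algebraic integers with $2r$ inverted. *)

From mathcomp Require Import all_boot all_order all_algebra all_field.
Set Implicit Arguments. Unset Strict Implicit. Unset Printing Implicit Defensive.
Import Order.TTheory GRing.Theory Num.Theory.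
Local Open Scope ring_scope.

Definition legendre (a : int) (p : nat) : int :=
  if (p%:Z %| a)%Z then 0
  else if [exists x : 'I_p, (p%:Z %| (x%:Z) ^+ 2 - a)%Z] then 1 else -1.

(* The ring of algebraic integers with m inverted: Z_bar[1/m]. *)
Definition Aint_inv (m : nat) (x : algC) : Prop :=
  exists k : nat, (m%:R ^+ k * x) \in Aint.

Definition congr_mod_inv (m p : nat) (x y : algC) : Prop :=
  exists z, Aint_inv m z /\ x - y = p%:R * z.

From mathcomp Require Import all_boot all_order all_algebra all_field.
From mathcomp Require Import zify.
Set Implicit Arguments. Unset Strict Implicit. Unset Printing Implicit Defensive.
Import Order.TTheory GRing.Theory Num.Theory.
Local Open Scope ring_scope.

(* Write eta = mu * c with mu = lambda - lambda^-1 and c = - i / sqrt(2r), so that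
   c^2 = -1/(2r).  As 2r divides p^s +- 1, lambda^(p^s) = lambda^(-+1), and the
   Frobenius congruence (x + y)^(p^s) = x^(p^s) + y^(p^s) mod p on algebraic integers
   gives mu^(p^s) = -+ mu.  On the other side c^(p^s) = c (-1/(2r))^((p^s-1)/2), and
   Euler's criterion, iterated s times, reduces (-2r)^((p^s-1)/2) to (-2r/p)^s mod p,
   while (2r)^(p^s-1) = 1 mod p by Fermat. *)

Lemma half_pred_oddM a b : odd a -> odd b ->
  ((a * b).-1./2 = a * b.-1./2 + a.-1./2)%N.
Proof.
move=> a_odd b_odd.
have [u ->] : exists u, a = u.*2.+1 by exists a./2; rewrite -[LHS]odd_double_half a_odd.
have [v ->] : exists v, b = v.*2.+1 by exists b./2; rewrite -[LHS]odd_double_half b_odd.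
rewrite (_ : (u.*2.+1 * v.*2.+1).-1 = (u.*2.+1 * v + u).*2)%N ?doubleK //=.
by rewrite -!muln2; nia.
Qed.

Section PrimeField.
Variable p : nat.
Hypotheses (p_pr : prime p) (p_odd : odd p).

Local Notation charFp := (pchar_Fp p_pr).

Lemma expr_card_Fp (x : 'F_p) : x ^+ p = x.
Proof. by rewrite -{2}(expf_card x) card_Fp. Qed.

Lemma expr_pexp_Fp (x : 'F_p) s : x ^+ (p ^ s) = x.
Proof.
elim: s => [|s IHs]; first by rewrite expr1.
by rewrite expnSr exprM IHs expr_card_Fp.
Qed.

Lemma expr_pred_pexp_Fp (x : 'F_p) s : x != 0 -> x ^+ (p ^ s).-1 = 1.
Proof.
move=> x_neq0; apply: (mulfI x_neq0).
by rewrite mulr1 -exprS prednK ?expn_gt0 ?prime_gt0 ?expr_pexp_Fp.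
Qed.

Lemma double_half_pred : (p.-1./2.*2 = p.-1)%N.
Proof. by rewrite even_halfK // -oddS prednK ?prime_gt0. Qed.

Lemma natr_Fp_inj i j : (i < p)%N -> (j < p)%N -> (i%:R : 'F_p) = j%:R -> i = j.
Proof. by move=> ip jp /(congr1 val) /=; rewrite !val_Fp_nat // !modn_small. Qed.

Lemma uniq_sqr_Fp :
  uniq [seq (i.+1)%:R ^+ 2 : 'F_p | i <- iota 0 p.-1./2].
Proof.
have p_gt2 := odd_prime_gt2 p_odd p_pr.
rewrite map_inj_in_uniq ?iota_uniq // => i j; rewrite !mem_iota !add0n => ih jh /eqP.
rewrite -subr_eq0 subr_sqr mulf_eq0 subr_eq0 -natrD -(dvdn_pcharf charFp).
case/orP=> [/eqP/natr_Fp_inj| /dvdn_leq]; [move=> ij; apply: succn_inj; apply: ij|]; lia.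
Qed.

Lemma fermat_Fp (x : 'F_p) : x != 0 -> x ^+ p.-1 = 1.
Proof. by move=> x_neq0; have := @expr_pred_pexp_Fp x 1 x_neq0; rewrite expn1. Qed.

Lemma expr_half_eq1_mem_sqr_Fp (a : 'F_p) : a ^+ p.-1./2 = 1 ->
  a \in [seq (i.+1)%:R ^+ 2 : 'F_p | i <- iota 0 p.-1./2].
Proof.
have p_gt2 := odd_prime_gt2 p_odd p_pr.
move=> a_root; apply/negPn/negP => a_nsqr; set h := p.-1./2 in a_root a_nsqr.
have h_gt0 : (0 < h)%N by rewrite /h; lia.
suff : (size (a :: [seq (i.+1)%:R ^+ 2 | i <- iota 0 h])
         < size ('X^h - 1 : {poly 'F_p})%R)%N.
  by rewrite size_XnsubC // /= size_map size_iota ltnn.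
apply: max_poly_roots.
- by rewrite -size_poly_eq0 size_XnsubC.
- rewrite /= {1}/root !hornerE a_root subrr eqxx /=.
  apply/allP => y /mapP[i]; rewrite mem_iota add0n => ih ->.
  rewrite /root !hornerE -exprM mul2n double_half_pred fermat_Fp ?subrr //.
  by rewrite -(dvdn_pcharf charFp); apply/negP => /dvdn_leq; lia.
- by rewrite /= a_nsqr uniq_sqr_Fp.
Qed.

Lemma euler_criterion (a : int) : ~~ (p%:Z %| a)%Z ->
  (a%:~R : 'F_p) ^+ p.-1./2 = (legendre a p)%:~R.
Proof.
move=> pNa; have a_neq0 : (a%:~R : 'F_p) != 0 by rewrite -(dvdz_pcharf charFp).
rewrite /legendre (negPf pNa); case: existsP => [[x]|no_sqrt].
  rewrite (dvdz_pcharf charFp) rmorphB rmorphXn /= subr_eq0 => /eqP x2a.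
  rewrite -x2a -exprM mul2n double_half_pred fermat_Fp //.
  by apply: contraNneq a_neq0 => x0; rewrite -x2a x0 expr0n.
have : ((a%:~R : 'F_p) ^+ p.-1./2) ^+ 2 = 1.
  by rewrite -exprM muln2 double_half_pred fermat_Fp.
move/eqP; rewrite sqrf_eq1 => /orP[/eqP/expr_half_eq1_mem_sqr_Fp/mapP[i]|/eqP -> //].
rewrite mem_iota add0n => ih a_sqr; case: no_sqrt.
have ip : (i.+1 < p)%N by move: ih; rewrite -ltn_double double_half_pred; lia.
by exists (Ordinal ip); rewrite (dvdz_pcharf charFp) rmorphB rmorphXn /= -a_sqr subrr.
Qed.

Lemma expr_half_pred_pexp_Fp (x : 'F_p) s :
  x ^+ (p ^ s).-1./2 = (x ^+ p.-1./2) ^+ s.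
Proof.
elim: s => [|s IHs]; first by rewrite expr0.
rewrite expnS half_pred_oddM ?oddX ?p_odd ?orbT // exprD mulnC exprM.
by rewrite expr_card_Fp IHs exprSr.
Qed.

Lemma dvdz_euler_pexp (a : int) s : ~~ (p%:Z %| a)%Z ->
  (p%:Z %| a ^+ (p ^ s).-1./2 - legendre a p ^+ s * a ^+ (p ^ s).-1)%Z.
Proof.
move=> pNa; have a_neq0 : (a%:~R : 'F_p) != 0 by rewrite -(dvdz_pcharf charFp).
rewrite (dvdz_pcharf charFp) rmorphB rmorphM !rmorphXn /=.
by rewrite expr_half_pred_pexp_Fp euler_criterion // expr_pred_pexp_Fp // mulr1 subrr.
Qed.

End PrimeField.

Lemma prime_dvd_bin_pexp p s k : prime p -> (0 < k < p ^ s)%N ->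
  (p %| 'C(p ^ s, k))%N.
Proof.
move=> p_pr /andP[k_gt0 k_lt]; apply: contraLR k_lt => pNbin; rewrite -leqNgt.
have : (p ^ s %| 'C(p ^ s, k) * k)%N.
  by case: k k_gt0 {pNbin} => // k _; rewrite mulnC -mul_bin_diag dvdn_mulr.
by rewrite Gauss_dvdr ?coprimeXl ?prime_coprime // => /dvdn_leq; apply.
Qed.

Lemma expr_pm1_dvd (F : fieldType) (x : F) k n (plus : bool) : x ^+ k = 1 ->
  (k %| if plus then n.+1 else n.-1)%N -> (0 < n)%N ->
  x ^+ n = if plus then x^-1 else x.
Proof.
move=> xk /(expr_dvd xk) x_pm1 n_gt0; case: plus x_pm1 => [x_succ|x_pred].
  have x_neq0 : x != 0.
    by apply: contra_eq_neq x_succ => ->; rewrite expr0n eq_sym oner_neq0.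
  by apply: (mulIf x_neq0); rewrite -exprSr x_succ mulVf.
by rewrite -(prednK n_gt0) exprS x_pred mulr1.
Qed.

Lemma Aint_expr_eq1 k (x : algC) : (0 < k)%N -> x ^+ k = 1 -> x \in Aint.
Proof. by move=> k_gt0 xk; apply: (Aint_unity_root k_gt0); rewrite unity_rootE xk. Qed.

Lemma Aint_expr_eq1V k (x : algC) : (0 < k)%N -> x ^+ k = 1 -> x^-1 \in Aint.
Proof. by move=> k_gt0 xk; apply: (Aint_expr_eq1 k_gt0); rewrite exprVn xk invr1. Qed.

Section IntegersWithInverse.
Variable m : nat.

Lemma Aint_inv_Aint x : x \in Aint -> Aint_inv m x.
Proof. by move=> xA; exists 0%N; rewrite mul1r. Qed.

Lemma Aint_invM x y : Aint_inv m x -> Aint_inv m y -> Aint_inv m (x * y).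
Proof. by move=> [k xA] [j yA]; exists (k + j)%N; rewrite exprD mulrACA rpredM. Qed.

Lemma Aint_invD x y : Aint_inv m x -> Aint_inv m y -> Aint_inv m (x + y).
Proof.
have mA n : (m%:R : algC) ^+ n \in Aint by rewrite rpredX ?Aint_Cnat.
move=> [k xA] [j yA]; exists (k + j)%N.
rewrite mulrDr exprD rpredD //; first by rewrite mulrAC rpredM.
by rewrite -mulrA rpredM.
Qed.

Lemma Aint_invN x : Aint_inv m x -> Aint_inv m (- x).
Proof. by move=> [k xA]; exists k; rewrite mulrN rpredN. Qed.

Lemma Aint_invX x n : Aint_inv m x -> Aint_inv m (x ^+ n).
Proof.
move=> xA; elim: n => [|n IHn]; first exact/Aint_inv_Aint/Aint1.
by rewrite exprS; apply: Aint_invM.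
Qed.

Lemma Aint_inv_natV : (0 < m)%N -> Aint_inv m m%:R^-1.
Proof. by move=> m_gt0; exists 1%N; rewrite mulfV ?pnatr_eq0 -?lt0n ?Aint1. Qed.

End IntegersWithInverse.

Section CongruenceModP.
Variables m p : nat.
Local Notation "x ≡ y" := (congr_mod_inv m p x y) (at level 70).

Lemma congr_refl x : x ≡ x.
Proof. by exists 0; split; [apply/Aint_inv_Aint/Aint0 | rewrite subrr mulr0]. Qed.

Lemma congr_trans y x z : x ≡ y -> y ≡ z -> x ≡ z.
Proof.
move=> [u [uA xy]] [v [vA yz]]; exists (u + v); split; first exact: Aint_invD.
by rewrite mulrDr -xy -yz addrA subrK.
Qed.

Lemma congr_mull c x y : Aint_inv m c -> x ≡ y -> c * x ≡ c * y.
Proof.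
move=> cA [u [uA xy]]; exists (c * u); split; first exact: Aint_invM.
by rewrite -mulrBr xy mulrCA.
Qed.

Lemma congr_mul x y u v : x ≡ y -> u ≡ v ->
  Aint_inv m y -> Aint_inv m u -> x * u ≡ y * v.
Proof.
move=> xy uv yA uA; apply: (@congr_trans (y * u)).
  by rewrite ![_ * u]mulrC; apply: congr_mull.
exact: congr_mull.
Qed.

Lemma congr_int (a b : int) : (p%:Z %| a - b)%Z -> a%:~R ≡ b%:~R.
Proof.
case/dvdzP=> k ab; exists k%:~R; split; first exact/Aint_inv_Aint/Aint_int.
by rewrite -rmorphB ab rmorphM mulrC.
Qed.

Hypothesis p_pr : prime p.

Lemma congr_frobenius s x y : x \in Aint -> y \in Aint ->
  (x + y) ^+ (p ^ s) ≡ x ^+ (p ^ s) + y ^+ (p ^ s).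
Proof.
move=> xA yA; set N := (p ^ s)%N.
have [n N_eq] : exists n, N = n.+1 by exists N.-1; rewrite prednK ?expn_gt0 ?prime_gt0.
exists (\sum_(i < n) (x ^+ (N - i.+1) * y ^+ i.+1) *+ ('C(N, i.+1) %/ p)); split.
  by apply/Aint_inv_Aint/rpred_sum => i _; rewrite rpredMn // rpredM // rpredX.
rewrite exprDn N_eq big_ord_recl big_ord_recr /= subn0 subnn !expr0.
rewrite mulr1 mul1r bin0 binn !mulr1n mulr_sumr addrCA addrK /bump /=.
apply: eq_bigr => i _; rewrite !add1n mulr_natl -mulrnA divnK // -N_eq.
by rewrite prime_dvd_bin_pexp // -/N N_eq !ltnS ltn_ord.
Qed.

Hypothesis p_odd : odd p.

Lemma congr_pexp_sub_inv s x : x \in Aint -> x^-1 \in Aint ->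
  (x - x^-1) ^+ (p ^ s) ≡ x ^+ (p ^ s) - (x ^+ (p ^ s))^-1.
Proof.
move=> xA xVA; have := congr_frobenius s xA (rpredNr xVA).
by rewrite exprNn -signr_odd oddX p_odd orbT expr1 mulN1r exprVn.
Qed.

Lemma congr_pexp_sub_inv_unity_root s k x (plus : bool) : (0 < k)%N ->
  x ^+ k = 1 -> (k %| if plus then (p ^ s).+1 else (p ^ s).-1)%N ->
  (x - x^-1) ^+ (p ^ s) ≡ (if plus then -1 else 1) * (x - x^-1).
Proof.
move=> k_gt0 xk k_dvd; have N_gt0 : (0 < p ^ s)%N by rewrite expn_gt0 prime_gt0.
have xA := Aint_expr_eq1 k_gt0 xk; have xVA := Aint_expr_eq1V k_gt0 xk.
apply: congr_trans (congr_pexp_sub_inv s xA xVA) _.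
rewrite (expr_pm1_dvd xk k_dvd N_gt0).
by case: (plus); rewrite ?invrK ?mulN1r ?opprB ?mul1r; apply: congr_refl.
Qed.

Hypotheses (m_gt0 : (0 < m)%N) (pNm : ~~ (p %| m)%N).

Lemma congr_pexp_sqrt_neg_inv s c : Aint_inv m c -> c ^+ 2 = - m%:R^-1 ->
  c ^+ (p ^ s) ≡ (legendre (- m%:Z) p)%:~R ^+ s * c.
Proof.
move=> cA c2; set M : algC := m%:R; set L : algC := (legendre (- m%:Z) p)%:~R.
have M_neq0 : M != 0 by rewrite pnatr_eq0 -lt0n.
set e := (p ^ s).-1./2.
have N_gt0 : (0 < p ^ s)%N by rewrite expn_gt0 prime_gt0.
have N_eq : (p ^ s = e.*2.+1)%N.
  by rewrite /e even_halfK ?prednK // -oddS prednK // oddX p_odd orbT.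
(* -1/m = m^-2 * (-m) brings the Euler criterion for the integer -m into play. *)
have c_pexp : c ^+ (p ^ s) = c * (M^-1 ^+ 2 * - M) ^+ e.
  rewrite N_eq exprS -mul2n exprM c2; congr (_ * _ ^+ _).
  by rewrite mulrN expr2 -mulrA mulVf ?mulr1.
have euler : (- M) ^+ e ≡ L ^+ s * (- M) ^+ e.*2.
  have pNm' : ~~ (p%:Z %| - m%:Z)%Z by rewrite dvdzE abszN.
  have := congr_int (dvdz_euler_pexp p_pr p_odd s pNm').
  by rewrite rmorphM !rmorphXn rmorphN /= -/e N_eq.
have cMA : Aint_inv m (c * M^-1 ^+ 2 ^+ e).
  by apply: Aint_invM; last by do 2 apply: Aint_invX; apply: Aint_inv_natV.
rewrite c_pexp exprMn mulrA; apply: congr_trans (congr_mull cMA euler) _.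
rewrite -mul2n exprM sqrrN mulrCA -mulrA -!exprMn mulVf // !expr1n mulr1.
exact: congr_refl.
Qed.

End CongruenceModP.

Lemma dvdn_mul2l_half d n : ~~ odd n -> (d %| n./2)%N -> (2 * d %| n)%N.
Proof. by move=> n_even; rewrite -{2}(even_halfK n_even) -mul2n dvdn_pmul2l. Qed.

Lemma prime_ndvdn_pexp_pm1 p s d (plus : bool) : prime p -> (0 < s)%N ->
  (d %| if plus then (p ^ s).+1 else (p ^ s).-1)%N -> ~~ (p %| d)%N.
Proof.
move=> p_pr s_gt0 d_dvd; apply/negP => /dvdn_trans/(_ d_dvd) {d_dvd}.
have p_pexp : (p %| p ^ s)%N by rewrite dvdn_exp.
have pN1 n : (p %| n)%N -> (p %| n.+1)%N = false.
  by move=> p_n; rewrite -addn1 dvdn_addr // Euclid_dvd1.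
case: plus => [|p_pred]; first by rewrite pN1.
have N_gt0 : (0 < p ^ s)%N by rewrite expn_gt0 prime_gt0.
by move: p_pexp; rewrite -(prednK N_gt0) pN1.
Qed.

Lemma Aint_i : 'i \in Aint.
Proof.
apply: (@Aint_unity_root 4) => //.
by rewrite unity_rootE (exprM _ 2 2) sqrCi sqrrN expr1n.
Qed.

Lemma Aint_sqrtC_nat n : sqrtC n%:R \in Aint.
Proof.
apply: (@root_monic_Aint ('X^2 - n%:R%:P)).
- by rewrite /root !hornerE sqrtCK subrr.
- exact: monicXnsubC.
- by rewrite polyOverXnsubC rpred_nat.
Qed.

Lemma sqr_i_div_sqrtC_nat n : ('i / sqrtC n%:R) ^+ 2 = - (n%:R : algC)^-1.
Proof. by rewrite exprMn sqrCi exprVn sqrtCK mulN1r. Qed.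

Lemma Aint_inv_i_div_sqrtC_nat n : (0 < n)%N -> Aint_inv n ('i / sqrtC n%:R).
Proof.
move=> n_gt0; set q := sqrtC n%:R.
have q_neq0 : q != 0 by rewrite sqrtC_eq0 pnatr_eq0 -lt0n.
have -> : 'i / q = 'i * q * n%:R^-1 by rewrite -[n%:R](sqrtCK) expr2 invfM mulrA mulfK.
apply: Aint_invM; last exact: Aint_inv_natV.
by apply/Aint_inv_Aint; rewrite rpredM ?Aint_i ?Aint_sqrtC_nat.
Qed.

Theorem lemma7 (p s r : nat) (plus : bool) :
  prime p -> odd p -> (1 <= s)%N -> (3 <= r)%N ->
  (r %| (if plus then (p ^ s).+1 else (p ^ s).-1)./2)%N ->
  let lambda : algC := r.-root (-1) in
  let eta : algC := - ((lambda - lambda^-1) / sqrtC (2 * r)%:R) * 'i in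
  congr_mod_inv (2 * r) p (eta ^+ (p ^ s))
    ((if plus then -1 else 1) * (legendre (- (2 * r)%:Z) p)%:~R ^+ s * eta).
Proof.
move=> p_pr p_odd s_gt0 r_ge3 r_dvd lambda eta.
have r_gt0 : (0 < r)%N by apply: leq_trans r_ge3.
have two_r_dvd : (2 * r %| if plus then (p ^ s).+1 else (p ^ s).-1)%N.
  apply: dvdn_mul2l_half r_dvd; have N_odd : odd (p ^ s) by rewrite oddX p_odd orbT.
  by case: plus; rewrite /= ?N_odd // -oddS prednK ?expn_gt0 ?prime_gt0.
have pN2r := prime_ndvdn_pexp_pm1 p_pr s_gt0 two_r_dvd.
have lambda_2r : lambda ^+ (2 * r) = 1 by rewrite mulnC exprM rootCK // sqrrN expr1n.
have two_r_gt0 : (0 < 2 * r)%N by rewrite muln_gt0.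
set mu : algC := lambda - lambda^-1; pose c : algC := - ('i / sqrtC (2 * r)%:R).
have -> : eta = mu * c by rewrite /eta /c mulNr mulrN mulrAC mulrA.
have mu_pexp :=
  congr_pexp_sub_inv_unity_root (2 * r) p_pr p_odd two_r_gt0 lambda_2r two_r_dvd.
have cA : Aint_inv (2 * r) c by apply/Aint_invN/Aint_inv_i_div_sqrtC_nat.
have c_sqr : c ^+ 2 = - (2 * r)%:R^-1 by rewrite sqrrN sqr_i_div_sqrtC_nat.
have c_pexp := congr_pexp_sqrt_neg_inv p_pr p_odd two_r_gt0 pN2r s cA c_sqr.
rewrite exprMn -mulrA (mulrCA _ mu) (mulrA _ mu).
apply: (congr_mul mu_pexp c_pexp); last exact: Aint_invX.
apply/Aint_inv_Aint; rewrite rpredM ?rpredB ?(Aint_expr_eq1 two_r_gt0 lambda_2r) //.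
  by case: (plus); rewrite ?rpredN1 ?rpred1.
exact: Aint_expr_eq1V lambda_2r.
Qed.
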